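(* Let $p$ be a random partition that generates the potential for TU games, i.e., $\sum_{\pi\in\Pi(N)}p_N(\pi)\sum_{B\in\pi}v(B)=\mathrm{Pot}(v)$ for all $N\subseteq\mathbf{U}$ and all TU games $v$ on $N$. Then (i) $p_N(\{N\})=\frac1n$ and $p_N(\{N\setminus\{i\},\{i\}\})=\frac{1}{n(n-1)}$ for all $N\subseteq\mathbf{U}$ and $i\in N$ (for the second identity, $n\ge 2$); (ii) for all $N\subseteq\mathbf{U}$ with $n\le 3$, $p_N(\pi)=p^\star_N(\pi)=\frac{\prod_{B\in\pi}(b-1)!}{n!}$ for all $\pi\in\Pi(N)$.
   Context: $\mathbf{U}$ is a finite set of players; cardinalities of $N,S,B$ are $n,s,b$. $\Pi(N)$ is the set of partitions of $N$. A random partition is a family $p=(p_N)_{N\subseteq\mathbf{U}}$ with $p_N$ a probability distribution on $\Pi(N)$. A TU game on $N$ is $v:2^N\to\mathbb{R}$ with $v(\emptyset)=0$. $\mathrm{Pot}$ is the potential for TU games, $\mathrm{Pot}(v)=\sum_{\emptyset\ne S\subseteq N}\frac{(s-1)!(n-s)!}{n!}v(S)$ (the unique map vanishing on the empty game with $\sum_{i\in N}[\mathrm{Pot}(v)-\mathrm{Pot}(v|_{2^{N\setminus\{i\}}})]=v(N)$). *)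

From HB Require Import structures.
From mathcomp Require Import all_boot all_order all_algebra.
Set Implicit Arguments. Unset Strict Implicit. Unset Printing Implicit Defensive.
Import Order.TTheory GRing.Theory Num.Theory.
Local Open Scope ring_scope.

Definition Partitions (U : finType) (N : {set U}) : {set {set {set U}}} :=
  [set P : {set {set U}} | partition P N].

Definition random_partition (U : finType) (R : realFieldType)
    (p : {set U} -> {set {set U}} -> R) : Prop :=
  forall N : {set U},
    (forall P, P \in Partitions N -> 0 <= p N P) /\
    \sum_(P in Partitions N) p N P = 1.

(* TU game on N: v : 2^N -> R with v(empty) = 0; represented as a function on all
   coalitions, of which only the values on subsets of N matter. *)
Definition TUgame (U : finType) (R : realFieldType) (v : {set U} -> R) : Prop :=
  v set0 = 0.

Definition Pot (U : finType) (R : realFieldType) (N : {set U}) (v : {set U} -> R) : R :=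
  \sum_(S : {set U} | (S \subset N) && (S != set0))
    (((#|S|.-1)`! * (#|N| - #|S|)`!)%:R / (#|N|`!)%:R) * v S.

Definition expected_worth (U : finType) (R : realFieldType)
    (p : {set U} -> {set {set U}} -> R) (N : {set U}) (v : {set U} -> R) : R :=
  \sum_(P in Partitions N) p N P * \sum_(B in P) v B.

Definition generates_Pot (U : finType) (R : realFieldType)
    (p : {set U} -> {set {set U}} -> R) : Prop :=
  forall (N : {set U}) (v : {set U} -> R), TUgame v -> expected_worth p N v = Pot N v.

Definition pstar (U : finType) (R : realFieldType) (N : {set U}) (P : {set {set U}}) : R :=
  (\prod_(B in P) (#|B|.-1)`!)%:R / (#|N|`!)%:R.

(* Evaluating the potential on the game that is 1 on one coalition S and 0
   elsewhere shows that the p_N-probability that S is a block equals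
   (s-1)!(n-s)!/n!, the weight of v(S) in Pot.  The only partition with block N
   (resp. N \ {i}) is {N} (resp. {N \ {i}, {i}}), which gives (i).  For n <= 3
   the only remaining partitions are the empty one for n = 0, which has
   probability 1, and the partition into singletons for n = 3: the block {i}
   has probability 1/3 and lies only in the singletons and in {N \ {i}, {i}},
   which has probability 1/6. *)

From HB Require Import structures.
From mathcomp Require Import all_boot all_order all_algebra.
From mathcomp Require Import ring lra zify.
Import Order.TTheory GRing.Theory Num.Theory.
Local Open Scope ring_scope.
Set Implicit Arguments. Unset Strict Implicit.

Section SmallPartitions.
Variable T : finType.
Implicit Types (N B : {set T}) (P : {set {set T}}).

Lemma partition_set1 P (x : T) : partition P [set x] -> P = [set [set x]].
Proof.
move=> partP; apply/setP => B; rewrite inE; apply/idP/eqP => [BP|->].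
  have := partitionS partP BP; rewrite subset1 (negbTE (partition_neq0 partP BP)).
  by rewrite orbF => /eqP.
have : x \in cover P by rewrite (cover_partition partP) set11.
case/bigcupP => C CP xC; have := partitionS partP CP.
by rewrite subset1 (negbTE (partition_neq0 partP CP)) orbF => /eqP <-.
Qed.

Lemma partition_block_compl0 P N B :
  partition P N -> B \in P -> N :\: B = set0 -> P = [set B].
Proof.
move=> partP BP NB0; have := partitionD1 partP BP; rewrite NB0 partition_set0.
by move=> /eqP PB0; rewrite -(setD1K BP) PB0 setU0.
Qed.

Lemma partition_block_compl1 P N B (i : T) :
  partition P N -> B \in P -> N :\: B = [set i] -> P = [set B; [set i]].
Proof.
move=> partP BP NBi; have := partitionD1 partP BP; rewrite NBi => /partition_set1.
by move=> PBi; rewrite -(setD1K BP) PBi.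
Qed.

Lemma partition_large_block P N B :
    partition P N -> B \in P -> (#|N| <= #|B|.+1)%N ->
  P = [set N] \/ exists2 i, i \in N & P = [set N :\ i; [set i]].
Proof.
move=> partP BP large; have BN := partitionS partP BP.
have : (#|N :\: B| <= 1)%N by rewrite cardsDS //; lia.
rewrite leq_eqVlt ltnS leqn0 cards_eq0.
case/orP => [/cards1P[i NBi]|/eqP NB0].
  have BE : B = N :\ i by rewrite -NBi setDDr setDv set0U (setIidPr BN).
  right; exists i; first by have := set11 i; rewrite -NBi inE => /andP[].
  by rewrite -BE; apply: partition_block_compl1 NBi.
left; have NB : N = B by apply/eqP; rewrite eqEsubset BN -setD_eq0 NB0 eqxx.
by rewrite NB; apply: partition_block_compl0 NB0.
Qed.

Lemma cardsD1_mem N (i : T) : i \in N -> #|N :\ i| = #|N|.-1.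
Proof. by move=> iN; rewrite (cardsD1 i N) iN. Qed.

Lemma partition_whole N : N != set0 -> partition [set N] N.
Proof. by move=> N0; rewrite /partition cover1 eqxx trivIset1 inE eq_sym N0. Qed.

Lemma partition_split1 N (i : T) :
  i \in N -> N :\ i != set0 -> partition [set N :\ i; [set i]] N.
Proof.
move=> iN Ni0; have i0 : [set i] != set0 by apply/set0Pn; exists i; rewrite set11.
have := partitionU1 (partition_whole i0) Ni0.
by rewrite disjoint_sym disjoints1 setD11 [_ :|: [set i]]setUC setD1K //; apply.
Qed.

Lemma partition_singletons N : partition [set [set x] | x in N] N.
Proof.
apply/and3P; split.
- apply/eqP/setP => y; apply/bigcupP/idP => [[_ /imsetP[x xN ->]]|yN].
    by rewrite inE => /eqP->.
  by exists [set y]; [apply: imset_f | apply: set11].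
- apply/trivIsetP => _ _ /imsetP[x _ ->] /imsetP[y _ ->] xy.
  by rewrite disjoints1 inE; apply: contra xy => /eqP->.
- by apply/imsetP => -[x _ /setP/(_ x)]; rewrite !inE eqxx.
Qed.

Lemma partition_card1_blocks P N :
  partition P N -> {in P, forall B, #|B| = 1%N} -> P = [set [set x] | x in N].
Proof.
move=> partP card1; apply/setP => B; apply/idP/imsetP => [BP|[x xN ->]].
  have /cards1P[x Bx] : #|B| == 1%N by rewrite card1.
  by exists x => //; apply: (subsetP (partitionS partP BP)); rewrite Bx set11.
have xP : x \in cover P by rewrite (cover_partition partP).
have /cards1P[y Py] : #|pblock P x| == 1%N by rewrite card1 ?pblock_mem.
by have := mem_pblock P x; rewrite xP Py inE => /eqP ->; rewrite -Py pblock_mem.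
Qed.

Lemma partition_card_le3 P N : partition P N -> (#|N| <= 3)%N ->
  [\/ P = [set N], exists2 i, i \in N & P = [set N :\ i; [set i]],
      N = set0 /\ P = set0 | #|N| = 3%N /\ P = [set [set x] | x in N]].
Proof.
move=> partP le3; have [N0|/set0Pn[x xN]] := eqVneq N set0.
  by apply: Or43; split=> //; apply/eqP; rewrite -partition_set0 -N0.
have [/exists_inP[B BP large]|/exists_inPn small] :=
  boolP [exists B in P, #|N| <= #|B|.+1]%N.
  case: (partition_large_block partP BP large) => [PN|[i iN PD]].
    exact: Or41.
  by apply: Or42; exists i.
have card1 B : B \in P -> #|B| = 1%N.
  move=> BP; have := small B BP; have := partition_neq0 partP BP.
  by rewrite -card_gt0 -ltnNge; lia.
have xP : x \in cover P by rewrite (cover_partition partP).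
have := small _ (pblock_mem xP); rewrite (card1 _ (pblock_mem xP)) => n3.
by apply: Or44; split; [lia | apply: partition_card1_blocks].
Qed.

Lemma partition_card3_set1 P N (i : T) :
    partition P N -> #|N| = 3%N -> [set i] \in P ->
  P = [set [set x] | x in N] \/ P = [set N :\ i; [set i]].
Proof.
move=> partP n3 iP; have iN : i \in N by rewrite -sub1set (partitionS partP iP).
case: (partition_card_le3 partP) => [|PN|[j jN PD]|[N0 _]|[_ ->]]; rewrite ?n3 //.
- by move: iP; rewrite PN inE => /eqP Ni; move: n3; rewrite -Ni cards1.
- move: iP; rewrite PD !inE => /orP[/eqP iNj|/eqP/set1_inj ->]; last by right.
  by move: n3; rewrite (cardsD1 j) jN -iNj cards1.
- by move: n3; rewrite N0 cards0.
- by left.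
Qed.

End SmallPartitions.

Lemma sumr_mul_delta (R : pzSemiRingType) (I : finType) (P : pred I)
    (F : I -> R) (a : I) :
  \sum_(x | P x) F x * (x == a)%:R = if P a then F a else 0.
Proof.
case: ifP => Pa.
  rewrite (bigD1 a) //= eqxx mulr1 big1 ?addr0 // => x /andP[_ /negbTE->].
  by rewrite mulr0.
rewrite big1 // => x Px; have [xa|] := eqVneq x a; last by rewrite mulr0.
by rewrite xa Pa in Px.
Qed.

Definition pot_weight (R : unitRingType) (n s : nat) : R :=
  ((s.-1)`! * (n - s)`!)%:R / (n`!)%:R.

Lemma pot_weight_full (R : numFieldType) n : (0 < n)%N -> pot_weight R n n = 1 / n%:R.
Proof.
case: n => // n _; rewrite /pot_weight succnK subnn fact0 muln1 factS natrM.
have fact_neq0 : (n`!%:R : R) != 0 by rewrite pnatr_eq0 -lt0n fact_gt0.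
by field; rewrite fact_neq0 nat1r pnatr_eq0.
Qed.

Lemma pot_weight_pred (R : numFieldType) n : (1 < n)%N ->
  pot_weight R n n.-1 = 1 / (n%:R * n.-1%:R).
Proof.
case: n => [|[|n]] // _; rewrite /pot_weight subSn // subnn /= !factS fact0 !natrM.
have fact_neq0 : (n`!%:R : R) != 0 by rewrite pnatr_eq0 -lt0n fact_gt0.
by field; rewrite fact_neq0 !paddr_eq0 ?ler0n ?ler01 ?oner_eq0.
Qed.

Section ProductWeights.
Variables (U : finType) (R : realFieldType).
Implicit Types N : {set U}.

Lemma pstar_whole N : pstar R N [set N] = pot_weight R #|N| #|N|.
Proof. by rewrite /pstar /pot_weight big_set1 subnn fact0 muln1. Qed.

Lemma pstar_split1 N i : i \in N -> (2 <= #|N|)%N ->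
  pstar R N [set N :\ i; [set i]] = pot_weight R #|N| #|N|.-1.
Proof.
move=> iN n2; have notin1 : N :\ i \notin [set [set i]].
  by rewrite inE; apply: contraTneq (set11 i) => <-; rewrite setD11.
rewrite /pstar /pot_weight big_setU1 //= big_set1 cards1 cardsD1_mem // muln1.
by rewrite (_ : #|N| - #|N|.-1 = 1)%N ?muln1 //; lia.
Qed.

Lemma pstar_singletons N : pstar R N [set [set x] | x in N] = 1 / (#|N|`!)%:R.
Proof. by rewrite /pstar big1 // => _ /imsetP[x _ ->]; rewrite cards1. Qed.

End ProductWeights.

Section PotentialGenerating.
Variables (U : finType) (R : realFieldType) (p : {set U} -> {set {set U}} -> R).
Hypothesis p_Pot : generates_Pot p.

Lemma sum_prob_block_mem (N S : {set U}) : S != set0 -> S \subset N ->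
  \sum_(P in Partitions N | S \in P) p N P = pot_weight R #|N| #|S|.
Proof.
move=> S0 SN; have game : TUgame (fun B => ((B == S)%:R : R)).
  by rewrite /TUgame eq_sym (negbTE S0).
have := p_Pot N game; rewrite /expected_worth /Pot /pot_weight.
rewrite sumr_mul_delta SN S0 /= => <-.
rewrite big_mkcondr; apply: eq_bigr => P _.
under eq_bigr do rewrite -[(_ == S)%:R]mul1r.
by rewrite sumr_mul_delta; case: ifP; rewrite ?mulr1 ?mulr0.
Qed.

Lemma prob_whole (N : {set U}) : N != set0 -> p N [set N] = pot_weight R #|N| #|N|.
Proof.
move=> N0; rewrite -sum_prob_block_mem // (big_pred1 [set N]) // => P.
apply/andP/eqP => [[]|->]; rewrite inE.
  by move=> partP NP; apply: partition_block_compl0 partP NP (setDv N).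
by rewrite partition_whole ?set11.
Qed.

Lemma prob_split1 (N : {set U}) i : i \in N -> (2 <= #|N|)%N ->
  p N [set N :\ i; [set i]] = pot_weight R #|N| #|N|.-1.
Proof.
move=> iN n2; have Ni0 : N :\ i != set0 by rewrite -card_gt0 cardsD1_mem //; lia.
rewrite -(cardsD1_mem iN) -sum_prob_block_mem ?subD1set //.
rewrite (big_pred1 [set N :\ i; [set i]]) // => P.
apply/andP/eqP => [[]|->]; rewrite inE.
  move=> partP NiP; apply: partition_block_compl1 partP NiP _.
  by rewrite setDDr setDv set0U (setIidPr _) // sub1set.
by rewrite partition_split1 // !inE eqxx.
Qed.

Lemma prob_singletons3 (N : {set U}) : #|N| = 3%N ->
  p N [set [set x] | x in N] = pstar R N [set [set x] | x in N].
Proof.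
move=> n3; have /card_gt0P[i iN] : (0 < #|N|)%N by rewrite n3.
set T := [set [set x] | x in N]; set D := [set N :\ i; [set i]].
have Ni0 : N :\ i != set0 by rewrite -card_gt0 cardsD1_mem // n3.
have TD : T \notin [set D].
  rewrite inE; apply: contraTneq (setU11 _ _ : N :\ i \in D) => <-.
  by apply/imsetP => -[x _ Nix]; move: (cardsD1_mem iN); rewrite Nix cards1 n3.
have block_i : \sum_(P in Partitions N | [set i] \in P) p N P = pot_weight R 3 1.
  rewrite -n3 -(cards1 i); apply: sum_prob_block_mem; last by rewrite sub1set.
  by rewrite -card_gt0 cards1.
rewrite (eq_bigl (fun P => P \in [set T; D])) in block_i; last first.
  move=> P; apply/andP/idP => [[]|]; rewrite !inE.
    by move=> partP /(partition_card3_set1 partP n3) [] ->; rewrite eqxx ?orbT.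
  case/orP => /eqP ->; first by rewrite partition_singletons; split=> //; apply: imset_f.
  by rewrite partition_split1 // !inE eqxx orbT.
rewrite big_setU1 // big_set1 prob_split1 ?n3 // in block_i.
have -> : p N T = pot_weight R 3 1 - pot_weight R 3 2 by rewrite -block_i addrK.
rewrite pstar_singletons n3 /pot_weight (_ : 3`! = 6)%N //.
by rewrite (_ : 0`! * (3 - 1)`! = 2)%N // (_ : 1`! * (3 - 2)`! = 1)%N //; lra.
Qed.

Lemma prob_empty : random_partition p -> p set0 set0 = 1.
Proof.
move=> /(_ set0)[_]; rewrite (big_pred1 set0) // => P.
by rewrite inE partition_set0.
Qed.

Lemma prob_card_le3 (N : {set U}) P : random_partition p -> (#|N| <= 3)%N ->
  P \in Partitions N -> p N P = pstar R N P.
Proof.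
move=> p_rand le3; rewrite inE => partP.
case: (partition_card_le3 partP le3) => [PN|[i iN PD]|[N0 P0]|[n3 PT]]; subst P.
- by rewrite prob_whole ?pstar_whole // (partition_neq0 partP (set11 N)).
- have : N :\ i != set0 by apply: partition_neq0 partP (setU11 _ _).
  rewrite -card_gt0 cardsD1_mem // => n2.
  by rewrite prob_split1 ?pstar_split1 //; lia.
- by rewrite N0 prob_empty // /pstar big_set0 cards0 divr1.
- exact: prob_singletons3.
Qed.

End PotentialGenerating.

Theorem corollary1 (U : finType) (R : realFieldType)
    (p : {set U} -> {set {set U}} -> R) :
  random_partition p -> generates_Pot p ->
  (forall N : {set U}, N != set0 -> p N [set N] = 1 / (#|N|%:R))
  /\ (forall (N : {set U}) (i : U), i \in N -> (2 <= #|N|)%N ->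
        p N [set N :\ i; [set i]] = 1 / (#|N|%:R * (#|N|.-1)%:R))
  /\ (forall N : {set U}, (#|N| <= 3)%N ->
        forall P, P \in Partitions N -> p N P = pstar R N P).
Proof.
move=> p_rand p_Pot; split; [|split].
- by move=> N N0; rewrite prob_whole // pot_weight_full // card_gt0.
- by move=> N i iN n2; rewrite prob_split1 // pot_weight_pred.
- by move=> N le3 P; apply: prob_card_le3.
Qed.
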